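(* Let $\mathbf{D}=\{(x_i,y_i):i=0,\dots,N\}$ and $\bar{\mathbf{D}}=\{(x_i,\bar y_i):i=0,\dots,N\}$ be two data sets with $x_0<x_1<\dots<x_N$, and let $f,\hat f\in C(I)$ with $f(x_i)=y_i$, $\hat f(x_i)=\bar y_i$. Let $b_r,\hat b_r\in C(I)$ ($r\in\mathbb{N}$) with $b_r(x_0)=f(x_0)$, $b_r(x_N)=f(x_N)$, $\hat b_r(x_0)=\hat f(x_0)$, $\hat b_r(x_N)=\hat f(x_N)$, $\sup_r\|b_r\|_\infty<\infty$, $\sup_r\|\hat b_r\|_\infty<\infty$. Let $f^\alpha_b$ be the non-stationary $\alpha$-fractal function of $f$ with base functions $b_r$, and $\bar f^\alpha_b$ the non-stationary $\alpha$-fractal function of $\hat f$ with base functions $\hat b_r$, both with the same scaling functions $\alpha_{i,r}$. Then $$\|f^\alpha_b-\bar f^\alpha_b\|_\infty\le\frac{\|f-\hat f\|_\infty+\|\alpha\|_\infty\sup_{r\in\mathbb{N}}\|b_r-\hat b_r\|_\infty}{1-\|\alpha\|_\infty}.$$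
   Context: $I=[x_0,x_N]$, $I_i=[x_{i-1},x_i]$, $l_i:I\to I_i$ the affine bijection $l_i(x)=\frac{x_i-x_{i-1}}{x_N-x_0}x+\frac{x_Nx_{i-1}-x_0x_i}{x_N-x_0}$, $Q_i=l_i^{-1}$. Scaling functions $\alpha_{i,r}:I\to\mathbb{R}$ ($i=1,\dots,N$, $r\in\mathbb{N}$) are continuous with $\|\alpha\|_\infty:=\sup_r\max_i\|\alpha_{i,r}\|_\infty<1$. Non-stationary $\alpha$-fractal function of $f\in C(I)$ with base functions $b=\{b_r\}$ (continuous, $b_r(x_0)=f(x_0)$, $b_r(x_N)=f(x_N)$, $\sup_r\|b_r\|_\infty<\infty$): with $C_f(I)=\{g\in C(I):g(x_0)=f(x_0),g(x_N)=f(x_N)\}$ and $(T^{\alpha_r}g)(x)=f(x)+\alpha_{i,r}(Q_i(x))(g-b_r)(Q_i(x))$ for $x\in I_i$, it is the uniform limit, independent of $g\in C_f(I)$, of $T^{\alpha_1}\circ\cdots\circ T^{\alpha_r}g$ as $r\to\infty$. (It interpolates the points $(x_i,f(x_i))$.) *)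

From HB Require Import structures.
From mathcomp Require Import all_boot all_order all_algebra.
From mathcomp Require Import all_classical all_reals all_analysis.
Set Implicit Arguments. Unset Strict Implicit. Unset Printing Implicit Defensive.
Import Order.TTheory GRing.Theory Num.Theory.
Import numFieldNormedType.Exports.
Local Open Scope classical_set_scope.
Local Open Scope ring_scope.

Section NSFractal.
Variable R : realType.

Definition Iset (a b : R) : set R := `[a, b]%classic.

Definition supnorm (a b : R) (g : R -> R) : R :=
  sup [set `|g x| | x in Iset a b].

(* l_i : I -> I_i the affine bijection, Q_i its inverse. *)
Definition lmap (xs : nat -> R) (N i : nat) (x : R) : R :=
  (xs i - xs i.-1) / (xs N - xs 0%N) * x
  + (xs N * xs i.-1 - xs 0%N * xs i) / (xs N - xs 0%N).

Definition Qmap (xs : nat -> R) (N i : nat) (y : R) : R :=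
  xs 0%N + (xs N - xs 0%N) / (xs i - xs i.-1) * (y - xs i.-1).

(* Index i in {1,..,N} of the subinterval I_i = [x_{i-1}, x_i] used for x:
   the least i >= 1 with x <= x_i. (At interior nodes both adjacent
   definitions agree on C_f(I), so this choice is immaterial.) *)
Definition cell (xs : nat -> R) (N : nat) (x : R) : nat :=
  (find (fun j => x <= xs j.+1) (iota 0 N)).+1.

Definition Top (xs : nat -> R) (N : nat) (f : R -> R)
  (alpha : nat -> nat -> R -> R) (b : nat -> R -> R) (r : nat)
  (g : R -> R) : R -> R :=
  fun x => let i := cell xs N x in
           let q := Qmap xs N i x in
           f x + alpha i r q * (g q - b r q).

(* compT r g = T^{alpha_0} o T^{alpha_1} o ... o T^{alpha_{r-1}} g *)
Fixpoint compT (xs : nat -> R) (N : nat) (f : R -> R)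
  (alpha : nat -> nat -> R -> R) (b : nat -> R -> R) (r : nat)
  (g : R -> R) : R -> R :=
  match r with
  | 0 => g
  | r'.+1 => compT xs N f alpha b r' (Top xs N f alpha b r' g)
  end.

Definition is_ns_fractal (xs : nat -> R) (N : nat) (f : R -> R)
  (alpha : nat -> nat -> R -> R) (b : nat -> R -> R) (F : R -> R) : Prop :=
  forall g : R -> R,
    {within Iset (xs 0%N) (xs N), continuous g} ->
    g (xs 0%N) = f (xs 0%N) -> g (xs N) = f (xs N) ->
    forall e : R, 0 < e -> exists M : nat, forall r : nat, (M <= r)%N ->
      forall x, Iset (xs 0%N) (xs N) x -> `|compT xs N f alpha b r g x - F x| < e.

Definition alpha_norms (xs : nat -> R) (N : nat)
  (alpha : nat -> nat -> R -> R) : set R :=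
  [set supnorm (xs 0%N) (xs N) (alpha i r) | i in [set i | (1 <= i <= N)%N]
                                         & r in [set: nat]].

Definition alpha_norm (xs : nat -> R) (N : nat)
  (alpha : nat -> nat -> R -> R) : R := sup (alpha_norms xs N alpha).

End NSFractal.

From HB Require Import structures.
From mathcomp Require Import all_boot all_order all_algebra.
From mathcomp Require Import all_classical all_reals all_analysis.
From mathcomp Require Import ring lra.
Set Implicit Arguments.
Unset Strict Implicit.
Import Order.TTheory GRing.Theory Num.Theory.
Import numFieldNormedType.Exports.
Local Open Scope classical_set_scope.
Local Open Scope ring_scope.

(* Put c = ||f - fhat||, a = ||alpha|| and B = sup_r ||b_r - bhat_r||.  Since
   T^{alpha_r} and its hat version share the scaling functions,
   |T u - That v| <= c + a (||u - v|| + B) pointwise on I, and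
   L = (c + a B) / (1 - a) is the fixed point of d |-> c + a (d + B).
   Starting from the seeds f and fhat, which are c <= L apart, every pair of
   iterates stays L apart, and so do the two limits. *)

Section SupNorm.
Variables (R : realType) (a b : R).
Implicit Types (g h : R -> R) (M : R).

Lemma continuous_itv_norm_ubound g :
  {within Iset a b, continuous g} -> has_ubound [set `|g x| | x in Iset a b].
Proof.
move=> cg; have /compact_bounded[M [_ gM]] :=
  continuous_compact cg (@segment_compact R a b).
exists (`|M| + 1) => _ [x Ix <-]; apply: (gM (`|M| + 1)); last by exists x.
by rewrite (le_lt_trans (ler_norm M)) // ltrDl.
Qed.

Lemma norm_le_supnorm g x :
  has_ubound [set `|g x| | x in Iset a b] -> Iset a b x ->
  `|g x| <= supnorm a b g.
Proof. by move=> gub Ix; apply: ub_le_sup => //; exists x. Qed.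

Lemma supnorm_le g M : a <= b ->
  (forall x, Iset a b x -> `|g x| <= M) -> supnorm a b g <= M.
Proof.
move=> ab gM; apply: ge_sup => [|_ [x Ix <-]]; last exact: gM.
by exists `|g a|, a => //; rewrite /Iset /= in_itv /= lexx ab.
Qed.

Lemma normB_ubound g h :
  has_ubound [set `|g x| | x in Iset a b] ->
  has_ubound [set `|h x| | x in Iset a b] ->
  has_ubound [set `|(g \- h) x| | x in Iset a b].
Proof.
move=> [Mg gM] [Mh hM]; exists (Mg + Mh) => _ [x Ix <-] /=.
by rewrite (le_trans (ler_normB _ _)) // lerD ?gM ?hM //; exists x.
Qed.

Lemma norm_le_sup_supnorms (S : set R) g x :
  has_ubound S -> S (supnorm a b g) ->
  has_ubound [set `|g x| | x in Iset a b] -> Iset a b x -> `|g x| <= sup S.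
Proof.
move=> Sub Sg gub Ix.
by rewrite (le_trans (norm_le_supnorm gub Ix)) //; apply: ub_le_sup.
Qed.

Lemma supnormB_ubound (g h : nat -> R -> R) : a <= b ->
  (forall r, has_ubound [set `|g r x| | x in Iset a b]) ->
  (forall r, has_ubound [set `|h r x| | x in Iset a b]) ->
  has_ubound [set supnorm a b (g r) | r in [set: nat]] ->
  has_ubound [set supnorm a b (h r) | r in [set: nat]] ->
  has_ubound [set supnorm a b (g r \- h r) | r in [set: nat]].
Proof.
move=> ab gub hub [Mg gM] [Mh hM]; exists (Mg + Mh) => _ [r _ <-].
apply: supnorm_le => // x Ix /=; rewrite (le_trans (ler_normB _ _)) //.
by rewrite lerD // (le_trans (norm_le_supnorm _ Ix)) ?gM ?hM //; exists r.
Qed.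

End SupNorm.

Lemma norm_le_alpha_norm (R : realType) (N : nat) (xs : nat -> R)
    (alpha : nat -> nat -> R -> R) i r q :
  has_ubound (alpha_norms xs N alpha) -> (1 <= i <= N)%N ->
  {within Iset (xs 0%N) (xs N), continuous alpha i r} ->
  Iset (xs 0%N) (xs N) q -> `|alpha i r q| <= alpha_norm xs N alpha.
Proof.
move=> alpha_ub i_in calpha Iq.
apply: norm_le_sup_supnorms (continuous_itv_norm_ubound calpha) Iq => //.
by exists i => //; exists r.
Qed.

Lemma normB_le_sup_supnormB (R : realType) (a b : R) (g h : nat -> R -> R) r x :
  a <= b ->
  (forall r, {within Iset a b, continuous g r}) ->
  (forall r, {within Iset a b, continuous h r}) ->
  has_ubound [set supnorm a b (g r) | r in [set: nat]] ->
  has_ubound [set supnorm a b (h r) | r in [set: nat]] ->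
  Iset a b x ->
  `|g r x - h r x| <= sup [set supnorm a b (g r \- h r) | r in [set: nat]].
Proof.
move=> ab cg ch g_ub h_ub Ix.
have gub r' := continuous_itv_norm_ubound (cg r').
have hub r' := continuous_itv_norm_ubound (ch r').
apply: (norm_le_sup_supnorms (g := g r \- h r)) (supnormB_ubound ab gub hub g_ub h_ub) _ _ Ix.
- by exists r.
- exact: normB_ubound.
Qed.

Lemma dist_le_of_uniform_limits (R : realFieldType) (T : Type) (A : set T)
    (us vs : nat -> T -> R) (U V : T -> R) (L : R) :
  (forall e, 0 < e -> exists M, forall r, (M <= r)%N ->
     forall x, A x -> `|us r x - U x| < e) ->
  (forall e, 0 < e -> exists M, forall r, (M <= r)%N ->
     forall x, A x -> `|vs r x - V x| < e) ->
  (forall r x, A x -> `|us r x - vs r x| <= L) ->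
  forall x, A x -> `|U x - V x| <= L.
Proof.
move=> usU vsV usvs x Ax; apply/ler_addgt0Pr => e e_gt0.
have e2_gt0 : 0 < e / 2 by rewrite divr_gt0.
have [M1 M1P] := usU _ e2_gt0; have [M2 M2P] := vsV _ e2_gt0.
pose r := maxn M1 M2.
have := M1P r (leq_maxl _ _) x Ax; rewrite distrC.
have := M2P r (leq_maxr _ _) x Ax.
have := usvs r x Ax.
have := ler_distD (us r x) (U x) (V x); have := ler_distD (vs r x) (us r x) (V x).
lra.
Qed.

Lemma affine_fixed_point (R : fieldType) (c a B : R) : a != 1 ->
  c + a * ((c + a * B) / (1 - a) + B) = (c + a * B) / (1 - a).
Proof. by move=> a_neq1; field; rewrite subr_eq0 eq_sym. Qed.

Lemma affine_fixed_point_ge (R : realFieldType) (c a B : R) :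
  0 <= c -> 0 <= a < 1 -> 0 <= B -> c <= (c + a * B) / (1 - a).
Proof. by move=> c_ge0 /andP[a_ge0 a_lt1] B_ge0; rewrite ler_pdivlMr ?subr_gt0 //; nra. Qed.

Section Partition.
Variables (R : realType) (N : nat) (xs : nat -> R).
Hypothesis xs_incr : forall i, (i < N)%N -> xs i < xs i.+1.

Lemma xs_le i j : (i <= j <= N)%N -> xs i <= xs j.
Proof.
case/andP; elim: j => [|j IH]; first by rewrite leqn0 => /eqP->.
rewrite leq_eqVlt => /orP[/eqP-> //|]; rewrite ltnS => ij jN.
exact: le_trans (IH ij (ltnW jN)) (ltW (xs_incr jN)).
Qed.

Hypothesis N_gt0 : (0 < N)%N.

Lemma cellP x : Iset (xs 0%N) (xs N) x ->
  [/\ (1 <= cell xs N x <= N)%N, xs (cell xs N x).-1 <= x & x <= xs (cell xs N x)].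
Proof.
rewrite /Iset /= in_itv /= => /andP[x0 xN]; rewrite /cell.
set P := fun j : nat => x <= xs j.+1.
have hasP : has P (iota 0 N).
  apply/hasP; exists N.-1; last by rewrite /P prednK.
  by rewrite mem_iota add0n prednK // leqnn andbT.
have find_lt : (find P (iota 0 N) < N)%N.
  by rewrite -[X in (_ < X)%N](size_iota 0 N) -has_find.
split; first by rewrite /= find_lt.
- case E: (find P (iota 0 N)) => [|j] //=.
  have := @before_find _ 0%N P (iota 0 N) j; rewrite E ltnSn => /(_ isT) /negbT.
  rewrite nth_iota; last by rewrite -E ltnW.
  by rewrite /P add0n -ltNge => /ltW.
- by have := nth_find 0%N hasP; rewrite nth_iota // add0n.
Qed.

(* Q_i maps x in [x_{i-1}, x_i] to x_0 + (x_N - x_0) t with t in [0, 1]. *)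
Lemma Qmap_cell_in x : Iset (xs 0%N) (xs N) x ->
  Iset (xs 0%N) (xs N) (Qmap xs N (cell xs N x) x).
Proof.
move=> Ix; have [/andP[i_ge1 i_leN] lo hi] := cellP Ix.
set i := cell xs N x in i_ge1 i_leN lo hi *.
have cell_lt : xs i.-1 < xs i by rewrite -{2}(prednK i_ge1) xs_incr // prednK.
have x0_le : xs 0%N <= xs i.-1 by rewrite xs_le // (leq_trans (leq_pred _)).
have le_xN : xs i <= xs N by rewrite xs_le ?i_leN ?leqnn.
pose t := (x - xs i.-1) / (xs i - xs i.-1).
have t_ge0 : 0 <= t by rewrite divr_ge0 // subr_ge0 // ltW.
have t_le1 : t <= 1 by rewrite ler_pdivrMr ?subr_gt0 // mul1r lerB.
have len_ge0 : 0 <= xs N - xs 0%N by rewrite subr_ge0 (le_trans x0_le) // (le_trans (ltW cell_lt)).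
rewrite /Iset /= in_itv /= /Qmap -/i mulrAC -mulrA -/t lerDl mulr_ge0 //=.
by rewrite -lerBrDl ler_piMr.
Qed.

End Partition.

Section Contraction.
Variables (R : realType) (N : nat) (xs : nat -> R).
Variables (f fhat : R -> R) (alpha : nat -> nat -> R -> R) (b bhat : nat -> R -> R).
Variables (c a B L : R).
Local Notation I := (Iset (xs 0%N) (xs N)).
Hypotheses (N_gt0 : (0 < N)%N) (xs_incr : forall i, (i < N)%N -> xs i < xs i.+1).
Hypothesis f_dist : forall x, I x -> `|f x - fhat x| <= c.
Hypothesis alpha_le : forall i r q, (1 <= i <= N)%N -> I q -> `|alpha i r q| <= a.
Hypothesis b_dist : forall r q, I q -> `|b r q - bhat r q| <= B.

Lemma Top_dist_le r (u v : R -> R) d :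
  (forall q, I q -> `|u q - v q| <= d) -> forall x, I x ->
  `|Top xs N f alpha b r u x - Top xs N fhat alpha bhat r v x| <= c + a * (d + B).
Proof.
move=> uv x Ix; rewrite /Top.
have [i_in _ _] := cellP N_gt0 Ix; have Iq := Qmap_cell_in xs_incr N_gt0 Ix.
set i := cell xs N x in i_in Iq *; set q := Qmap xs N i x in Iq *.
have -> : f x + alpha i r q * (u q - b r q) - (fhat x + alpha i r q * (v q - bhat r q))
    = (f x - fhat x) + alpha i r q * ((u q - v q) - (b r q - bhat r q)) by ring.
rewrite (le_trans (ler_normD _ _)) // lerD ?f_dist // normrM.
rewrite ler_pM ?alpha_le // (le_trans (ler_normB _ _)) //.
by rewrite lerD ?uv ?b_dist.
Qed.

Hypothesis L_fixed : c + a * (L + B) = L.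

Lemma compT_dist_le r (u v : R -> R) :
  (forall q, I q -> `|u q - v q| <= L) -> forall x, I x ->
  `|compT xs N f alpha b r u x - compT xs N fhat alpha bhat r v x| <= L.
Proof.
elim: r u v => [|r IH] u v uv x Ix //=; first exact: uv.
by apply: IH => // q Iq; rewrite -[X in _ <= X]L_fixed Top_dist_le.
Qed.

End Contraction.

Theorem mainTheorem8 (R : realType) (N : nat) (xs : nat -> R)
  (y ybar : nat -> R) (f fhat : R -> R)
  (alpha : nat -> nat -> R -> R) (b bhat : nat -> R -> R) (F Fbar : R -> R) :
  (0 < N)%N ->
  (forall i : nat, (i < N)%N -> xs i < xs i.+1) ->
  {within Iset (xs 0%N) (xs N), continuous f} ->
  {within Iset (xs 0%N) (xs N), continuous fhat} ->
  (forall i : nat, (i <= N)%N -> f (xs i) = y i) ->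
  (forall i : nat, (i <= N)%N -> fhat (xs i) = ybar i) ->
  (forall r : nat, {within Iset (xs 0%N) (xs N), continuous b r}) ->
  (forall r : nat, {within Iset (xs 0%N) (xs N), continuous bhat r}) ->
  (forall r : nat, b r (xs 0%N) = f (xs 0%N) /\ b r (xs N) = f (xs N)) ->
  (forall r : nat, bhat r (xs 0%N) = fhat (xs 0%N) /\ bhat r (xs N) = fhat (xs N)) ->
  has_ubound [set supnorm (xs 0%N) (xs N) (b r) | r in [set: nat]] ->
  has_ubound [set supnorm (xs 0%N) (xs N) (bhat r) | r in [set: nat]] ->
  (forall i r : nat, (1 <= i <= N)%N ->
     {within Iset (xs 0%N) (xs N), continuous alpha i r}) ->
  has_ubound (alpha_norms xs N alpha) ->
  alpha_norm xs N alpha < 1 ->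
  is_ns_fractal xs N f alpha b F ->
  is_ns_fractal xs N fhat alpha bhat Fbar ->
  supnorm (xs 0%N) (xs N) (F \- Fbar) <=
    (supnorm (xs 0%N) (xs N) (f \- fhat)
     + alpha_norm xs N alpha
       * sup [set supnorm (xs 0%N) (xs N) (b r \- bhat r) | r in [set: nat]])
    / (1 - alpha_norm xs N alpha).
Proof.
move=> N_gt0 xs_incr cf cfhat _ _ cb cbhat _ _ b_ub bhat_ub calpha alpha_ub
  alpha_lt1 fracF fracFbar.
have x0_le_xN : xs 0%N <= xs N by rewrite (xs_le xs_incr) // leqnn.
have I_x0 : Iset (xs 0%N) (xs N) (xs 0%N) by rewrite /Iset /= in_itv /= lexx.
set c := supnorm _ _ (f \- fhat); set a := alpha_norm _ _ _; set B := sup _.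
have f_dist x : Iset (xs 0%N) (xs N) x -> `|f x - fhat x| <= c.
  exact: norm_le_supnorm (normB_ubound (continuous_itv_norm_ubound cf)
                                       (continuous_itv_norm_ubound cfhat)).
have alpha_le i r q (i_in : (1 <= i <= N)%N) : Iset (xs 0%N) (xs N) q -> `|alpha i r q| <= a.
  exact: norm_le_alpha_norm alpha_ub i_in (calpha i r i_in).
have b_dist r q : Iset (xs 0%N) (xs N) q -> `|b r q - bhat r q| <= B.
  exact: normB_le_sup_supnormB x0_le_xN cb cbhat b_ub bhat_ub.
have c_le_L : c <= (c + a * B) / (1 - a).
  apply: affine_fixed_point_ge; rewrite ?alpha_lt1 ?andbT.
  - exact: le_trans (normr_ge0 _) (f_dist _ I_x0).
  - exact: le_trans (normr_ge0 _) (alpha_le 1%N 0%N _ N_gt0 I_x0).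
  - exact: le_trans (normr_ge0 _) (b_dist 0%N _ I_x0).
have L_fixed := affine_fixed_point c B (negbT (lt_eqF alpha_lt1)).
have seeds_close p : Iset (xs 0%N) (xs N) p -> `|f p - fhat p| <= (c + a * B) / (1 - a).
  by move=> Ip; rewrite (le_trans (f_dist p Ip)).
apply: supnorm_le => // x Ix /=.
apply: (dist_le_of_uniform_limits (fracF f cf erefl erefl) (fracFbar fhat cfhat erefl erefl)) Ix.
by move=> r; apply: (compT_dist_le N_gt0 xs_incr f_dist alpha_le b_dist L_fixed r seeds_close).
Qed.
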